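(* For every finite connected undirected unweighted graph $G=(V,E)$ with $n$ vertices, every $r\ge 1$ and every $S_0\subseteq V$, $\mathrm{fp}^{1/2,r}_G(S_0)\ge |S_0|/n$.
   Context: The $\lambda$-mixed Moran process on a connected graph $G=(V,E)$ with $n=|V|\ge 2$: each vertex hosts a resident (fitness $1$) or mutant (fitness $r>0$); the state is the mutant set $S_t\subseteq V$. Each step, independently: with probability $\lambda$ a Birth-death step (a vertex $u$ chosen with probability proportional to fitness among all vertices; a uniformly random neighbor of $u$ takes $u$'s type); with probability $1-\lambda$ a death-Birth step (a uniformly random vertex $v$ dies; a neighbor $u$ of $v$ chosen with probability proportional to fitness among the neighbors of $v$; $v$ takes $u$'s type). $\mathrm{fp}^{\lambda,r}_G(S_0)$ is the probability that the process started at $S_0$ reaches $S_t=V$. *)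

From HB Require Import structures.
From mathcomp Require Import all_boot all_order all_algebra.
From mathcomp Require Import all_classical all_reals all_analysis.
Set Implicit Arguments. Unset Strict Implicit. Unset Printing Implicit Defensive.
Import Order.TTheory GRing.Theory Num.Theory numFieldNormedType.Exports.
Local Open Scope ring_scope.

Section Moran.
Variables (R : realType) (V : finType) (e : rel V).

Definition simple_graph := symmetric e /\ irreflexive e.
Definition connected_graph := forall x y : V, connect e x y.

Definition nbhd (u : V) : {set V} := [set v | e u v].

(* fitness: mutants (in S) have fitness r, residents fitness 1 *)
Definition fit (r : R) (S : {set V}) (u : V) : R := if u \in S then r else 1.

(* vertex v takes the type of vertex u *)
Definition upd (S : {set V}) (u v : V) : {set V} :=
  if u \in S then v |: S else S :\ v.

(* one-step transition probability of the lambda-mixed Moran process *)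
Definition trans (lam r : R) (S S' : {set V}) : R :=
  lam * (\sum_(u : V) \sum_(v in nbhd u)
           (fit r S u / (\sum_(w : V) fit r S w)) * (#|nbhd u|%:R)^-1
           * (upd S u v == S')%:R)
  + (1 - lam) * (\sum_(v : V) \sum_(u in nbhd v)
           (#|V|%:R)^-1 * (fit r S u / (\sum_(w in nbhd v) fit r S w))
           * (upd S u v == S')%:R).

Fixpoint hitV (lam r : R) (t : nat) (S : {set V}) : R :=
  if S == [set: V] then 1 else
  match t with
  | 0 => 0
  | t'.+1 => \sum_(S' : {set V}) trans lam r S S' * hitV lam r t' S'
  end.

(* fixation probability: probability of ever reaching S_t = V,
   i.e. the limit of the (nondecreasing) probabilities of reaching V
   within t steps *)
Definition fp (lam r : R) (S0 : {set V}) : R := limn (fun t => hitV lam r t S0).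

End Moran.

From HB Require Import structures.
From mathcomp Require Import all_boot all_order all_algebra.
From mathcomp Require Import all_classical all_reals all_analysis.
From mathcomp Require Import ring lra zify.
Set Implicit Arguments. Unset Strict Implicit. Unset Printing Implicit Defensive.
Import Order.TTheory GRing.Theory Num.Theory numFieldNormedType.Exports.
Local Open Scope ring_scope.

(* With lambda = 1/2 and r >= 1, along every edge between a mutant u and a
   resident v the type of u is at least as likely to be copied onto v as the
   other way round: the Birth-death term of either direction is dominated by
   the death-Birth term of the other.  Hence the mutant density |S|/n is
   subharmonic for the chain.  A subharmonic phi <= 1 vanishing at the empty
   set is bounded by P(V reached by time t) + P(not yet absorbed at time t),
   and the last term decays geometrically because from every nonempty state
   the chain reaches V within n steps with probability at least
   (1/(2n^2))^n. *)

Lemma sumr_pair_ge0 (R : numDomainType) (I : finType) (K : I -> I -> R) :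
  (forall i j, 0 <= K i j + K j i) -> 0 <= \sum_i \sum_j K i j.
Proof.
move=> Kij; rewrite -(pmulrn_lge0 _ (ltn0Sn 1)) mulr2n.
rewrite [X in _ + X]exchange_big -big_split /=.
by apply: sumr_ge0 => i _; rewrite -big_split; apply: sumr_ge0 => j _; apply: Kij.
Qed.

Lemma ler_of_expr_gap (R : realType) (c l M : R) :
  0 <= M < 1 -> (forall k, c - M ^+ k <= l) -> c <= l.
Proof.
case/andP=> M_ge0 M_lt1 gap.
have cvgc : ((fun k => c - M ^+ k) @ \oo --> c)%classic.
  rewrite -[X in (_ --> X)%classic]subr0; apply: cvgB; first exact: cvg_cst.
  by apply: cvg_expr; rewrite ger0_norm.
rewrite -(cvg_lim _ cvgc) //; apply: limr_le; first exact: cvgP cvgc.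
by near=> k; apply: gap.
Unshelve. all: by end_near.
Qed.

Section AbsorbingChain.
Variables (R : realType) (X : finType) (P : X -> X -> R).
Hypothesis P_ge0 : forall x y, 0 <= P x y.
Hypothesis P_sum1 : forall x, \sum_y P x y = 1.
Variables (a b : X).

Definition step (f : X -> R) x : R := \sum_y P x y * f y.

Lemma step_le f g x : (forall y, f y <= g y) -> step f x <= step g x.
Proof. by move=> fg; apply: ler_sum => y _; apply: ler_wpM2l. Qed.

Lemma step_cst c x : step (fun=> c) x = c.
Proof. by rewrite /step -mulr_suml P_sum1 mul1r. Qed.

Lemma stepD f g x : step (fun y => f y + g y) x = step f x + step g x.
Proof. by rewrite /step -big_split; apply: eq_bigr => y _; rewrite mulrDr. Qed.

Lemma stepZ c f x : step (fun y => c * f y) x = c * step f x.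
Proof. by rewrite /step mulr_sumr; apply: eq_bigr => y _; rewrite mulrCA. Qed.

Lemma step_ge0 f x : (forall y, 0 <= f y) -> 0 <= step f x.
Proof. by move=> f_ge0; apply: sumr_ge0 => y _; rewrite mulr_ge0. Qed.

Lemma step_ge_term f x y : (forall z, 0 <= f z) -> P x y * f y <= step f x.
Proof.
move=> f_ge0; rewrite /step (bigD1 y) //= lerDl.
by apply: sumr_ge0 => z _; rewrite mulr_ge0.
Qed.

Fixpoint hit t x : R :=
  if x == a then 1 else if t is t'.+1 then step (hit t') x else 0.

Fixpoint unabsorbed t x : R :=
  if (x == a) || (x == b) then 0 else
  if t is t'.+1 then step (unabsorbed t') x else 1.

Lemma hit_ge0 t x : 0 <= hit t x.
Proof.
elim: t x => [|t IH] x /=; case: ifP => // _; exact: step_ge0.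
Qed.

Lemma hit_le_succ t x : hit t x <= hit t.+1 x.
Proof.
elim: t x => [|t IH] x /=; case: ifP => // _; last exact: step_le.
by apply: step_ge0 => y; case: ifP.
Qed.

Lemma unabsorbed_ge0 t x : 0 <= unabsorbed t x.
Proof.
elim: t x => [|t IH] x /=; case: ifP => // _; exact: step_ge0.
Qed.

Lemma hit_unabsorbed_le1 t x : hit t x + unabsorbed t x <= 1.
Proof.
elim: t x => [|t IH] x /=.
  by case: (x == a); case: (x == b); rewrite /= ?addr0 ?add0r.
case: (x == a) => /=; first by rewrite addr0.
rewrite -[X in _ <= X](step_cst 1 x); case: (x == b) => /=.
  rewrite addr0; apply: step_le => y.
  by apply: le_trans (IH y); rewrite lerDl unabsorbed_ge0.
by rewrite -stepD; apply: step_le.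
Qed.

Lemma hit_le1 t x : hit t x <= 1.
Proof.
by apply: le_trans (hit_unabsorbed_le1 t x); rewrite lerDl unabsorbed_ge0.
Qed.

Lemma unabsorbed_absorbed t x : (x == a) || (x == b) -> unabsorbed t x = 0.
Proof. by move=> absorbed; case: t => [|t] /=; rewrite absorbed. Qed.

Lemma unabsorbed_addn_le m (M : R) t x : (forall y, unabsorbed m y <= M) ->
  unabsorbed (t + m) x <= M * unabsorbed t x.
Proof.
move=> le_M; elim: t x => [|t IH] x /=.
  by case: ifP => [/unabsorbed_absorbed->|_]; rewrite ?mulr0 ?mulr1.
by case: ifP => _; rewrite ?mulr0 // -stepZ; apply: step_le.
Qed.

Lemma unabsorbed_mul_le N (M : R) k x :
  0 <= M -> (forall y, unabsorbed N y <= M) -> unabsorbed (k * N) x <= M ^+ k.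
Proof.
move=> M_ge0 le_M; elim: k x => [|k IH] x; first by rewrite /=; case: ifP.
rewrite mulSnr exprS; apply: le_trans (unabsorbed_addn_le (k * N) x le_M) _.
exact: ler_wpM2l.
Qed.

Lemma hit_ge_expr (rho : X -> nat) (eps : R) : 0 <= eps -> eps <= 1 ->
    (forall x, x != a -> x != b ->
       exists2 y, y != b & eps <= P x y /\ (rho y < rho x)%N) ->
  forall k x, x != b -> (rho x <= k)%N -> eps ^+ k <= hit k x.
Proof.
move=> eps_ge0 eps_le1 progress.
elim=> [|k IH] x xb rho_x /=; case: eqP => [_|/eqP xa].
- by rewrite expr0.
- have [y _ [_]] := progress x xa xb.
  by move: rho_x; rewrite leqn0 => /eqP->.
- exact: exprn_ile1.
have [y yb [Pxy rho_y]] := progress x xa xb.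
apply: le_trans (step_ge_term x y (hit_ge0 k)); rewrite exprS.
apply: ler_pM => //; first exact: exprn_ge0.
by apply: IH => //; rewrite -ltnS (leq_trans rho_y).
Qed.

Section Subharmonic.
Variable phi : X -> R.
Hypothesis phi_le1 : forall x, phi x <= 1.
Hypothesis phi_b : phi b <= 0.
Hypothesis phi_sub : forall x, x != a -> phi x <= step phi x.

Lemma subharmonic_le_hit_unabsorbed t x : phi x <= hit t x + unabsorbed t x.
Proof.
have at_b s : phi b <= hit s b + unabsorbed s b.
  exact: le_trans phi_b (addr_ge0 (hit_ge0 _ _) (unabsorbed_ge0 _ _)).
elim: t x => [|t IH] x; (have [->|xb] := eqVneq x b; first exact: at_b);
  rewrite /= (negbTE xb) orbF.
  by case: eqP; rewrite ?addr0 ?add0r.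
case: eqP => [|/eqP xa]; first by rewrite addr0.
rewrite -stepD; apply: le_trans (phi_sub xa) _; apply: step_le => y.
by have [->|yb] := eqVneq y b; [exact: at_b | exact: IH].
Qed.

Variables (N : nat) (eps : R).
Hypotheses (eps_gt0 : 0 < eps) (eps_le1 : eps <= 1).
Hypothesis hit_N : forall x, x != b -> eps <= hit N x.

Lemma unabsorbed_N_le x : unabsorbed N x <= 1 - eps.
Proof.
have [->|xb] := eqVneq x b.
  by rewrite unabsorbed_absorbed ?eqxx ?orbT // subr_ge0.
rewrite lerBrDl; apply: le_trans (hit_unabsorbed_le1 N x).
by rewrite lerD2r hit_N.
Qed.

Lemma subharmonic_le_lim_hit x : phi x <= limn (fun t => hit t x).
Proof.
have nd_hit : nondecreasing_seq (fun t => hit t x).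
  by apply/nondecreasing_seqP => t; exact: hit_le_succ.
have cvg_hit : cvgn (fun t => hit t x).
  apply/cvg_ex; eexists; apply: nondecreasing_cvgn nd_hit _.
  by exists 1 => _ [t _ <-]; exact: hit_le1.
apply: (@ler_of_expr_gap _ _ _ (1 - eps)).
  by rewrite subr_ge0 eps_le1 ltrBlDr ltrDl eps_gt0.
move=> k; rewrite lerBlDr.
apply: le_trans (subharmonic_le_hit_unabsorbed (k * N) x) _.
apply: lerD; first exact: nondecreasing_cvgn_le.
by apply: unabsorbed_mul_le; [rewrite subr_ge0 | exact: unabsorbed_N_le].
Qed.

End Subharmonic.
End AbsorbingChain.

Lemma inv_le_between (R : realFieldType) (c s r : R) :
  0 < c -> c <= s <= r * c -> s^-1 <= c^-1 <= r / s.
Proof.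
move=> c_gt0 /andP[c_le_s s_le_rc]; have s_gt0 := lt_le_trans c_gt0 c_le_s.
by rewrite lef_pV2 ?posrE // c_le_s /= ler_pdivlMr // mulrC ler_pdivrMr.
Qed.

Lemma hitV_hit (R : realType) (V : finType) (e : rel V) (lam r : R) t S :
  hitV e lam r t S = hit (trans e lam r) [set: V] t S.
Proof.
by elim: t S => [|t IH] S //=; rewrite /step; under eq_bigr do rewrite IH.
Qed.

Section MixedMoran.
Variables (R : realType) (V : finType) (e : rel V).
Hypothesis e_sym : symmetric e.
Hypothesis e_conn : connected_graph e.
Hypothesis V_gt1 : (1 < #|V|)%N.
Variable r : R.
Hypothesis r_ge1 : 1 <= r.

Local Notation set0 := (@finset.set0 V).
Local Notation n := (#|V|%:R : R).
Local Notation delta := (2^-1 * (n^-1 * n^-1) : R).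
Local Notation deg u := (#|nbhd e u|%:R : R).
Local Notation total_fit S := (\sum_(w : V) fit r S w).
Local Notation nbhd_fit S v := (\sum_(w in nbhd e v) fit r S w).

Implicit Types (S : {set V}) (u v : V) (lam : R).

Lemma fit_ge1 S u : 1 <= fit r S u.
Proof. by rewrite /fit; case: ifP. Qed.

Lemma fit_le S u : fit r S u <= r.
Proof. by rewrite /fit; case: ifP. Qed.

Lemma fit_gt0 S u : 0 < fit r S u.
Proof. exact: lt_le_trans ltr01 (fit_ge1 S u). Qed.

Lemma fit_mutant S u : u \in S -> fit r S u = r.
Proof. by rewrite /fit => ->. Qed.

Lemma fit_resident S u : u \notin S -> fit r S u = 1.
Proof. by rewrite /fit => /negbTE->. Qed.

Lemma sum_fit_bounds (A : {pred V}) S :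
  #|A|%:R <= \sum_(w in A) fit r S w <= r * #|A|%:R.
Proof.
rewrite mulr_natr -!sumr_const.
by apply/andP; split; apply: ler_sum => w _; rewrite ?fit_ge1 ?fit_le.
Qed.

Lemma n_gt0 : 0 < n.
Proof. by rewrite ltr0n (ltn_trans _ V_gt1). Qed.

Lemma card_nbhd_gt0 v : (0 < #|nbhd e v|)%N.
Proof.
have [y yv] : exists y, y != v.
  have : (0 < #|[set~ v]|)%N by rewrite cardsC1 -ltnS prednK // (ltn_trans _ V_gt1).
  by case/card_gt0P => y; rewrite !inE; exists y.
have /connectP [[|z p] /= path_vy last_vy] := e_conn v y.
  by rewrite last_vy eqxx in yv.
by apply/card_gt0P; exists z; rewrite inE; case/andP: path_vy.
Qed.

Lemma deg_gt0 v : 0 < deg v.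
Proof. by rewrite ltr0n card_nbhd_gt0. Qed.

Lemma deg_le_n v : deg v <= n.
Proof. by rewrite ler_nat max_card. Qed.

Lemma total_fit_bounds S : n <= total_fit S <= r * n.
Proof.
have := sum_fit_bounds predT S.
by rewrite cardT -cardE (eq_bigl xpredT).
Qed.

Lemma inv_total_fit_bounds S : (total_fit S)^-1 <= n^-1 <= r / total_fit S.
Proof. exact: inv_le_between n_gt0 (total_fit_bounds S). Qed.

Lemma inv_nbhd_fit_bounds S v :
  (nbhd_fit S v)^-1 <= (deg v)^-1 <= r / nbhd_fit S v.
Proof. exact: inv_le_between (deg_gt0 v) (sum_fit_bounds _ S). Qed.

Lemma total_fit_gt0 S : 0 < total_fit S.
Proof. by apply: lt_le_trans n_gt0 _; case/andP: (total_fit_bounds S). Qed.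

Lemma nbhd_fit_gt0 S v : 0 < nbhd_fit S v.
Proof.
by apply: lt_le_trans (deg_gt0 v) _; case/andP: (sum_fit_bounds (nbhd e v) S).
Qed.

Definition birth S u : R := fit r S u / total_fit S / deg u.
Definition death S u v : R := n^-1 * (fit r S u / nbhd_fit S v).
(* Probability that one step of the lambda-mixed process copies the type of
   u onto v: Birth-death with u reproducing, or death-Birth with v dying. *)
Definition spread lam S u v : R :=
  (e u v)%:R * (lam * birth S u + (1 - lam) * death S u v).

Lemma birth_gt0 S u : 0 < birth S u.
Proof. by rewrite /birth !divr_gt0 ?fit_gt0 ?total_fit_gt0 ?deg_gt0. Qed.

Lemma death_gt0 S u v : 0 < death S u v.
Proof.
by rewrite /death mulr_gt0 ?invr_gt0 ?n_gt0 ?divr_gt0 ?fit_gt0 ?nbhd_fit_gt0.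
Qed.

Lemma spread_ge0 lam S u v : 0 <= lam <= 1 -> 0 <= spread lam S u v.
Proof.
case/andP=> lam_ge0 lam_le1; rewrite /spread mulr_ge0 //.
have := birth_gt0 S u; have := death_gt0 S u v; nra.
Qed.

Lemma sum_mkcond_nbhd u (F : V -> R) :
  \sum_(v in nbhd e u) F v = \sum_v (e u v)%:R * F v.
Proof.
rewrite big_mkcond; apply: eq_bigr => v _.
by rewrite inE; case: (e u v); rewrite ?mul1r ?mul0r.
Qed.

Lemma trans_spread lam S S' :
  trans e lam r S S' = \sum_u \sum_v spread lam S u v * (upd S u v == S')%:R.
Proof.
pose lands u v : R := (upd S u v == S')%:R.
have birth_part : \sum_u \sum_(v in nbhd e u) birth S u * lands u v
    = \sum_u \sum_v (e u v)%:R * birth S u * lands u v.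
  by apply: eq_bigr => u _; rewrite sum_mkcond_nbhd; under eq_bigr do rewrite mulrA.
have death_part : \sum_v \sum_(u in nbhd e v) death S u v * lands u v
    = \sum_u \sum_v (e u v)%:R * death S u v * lands u v.
  under eq_bigr do rewrite sum_mkcond_nbhd.
  by rewrite exchange_big; do 2![apply: eq_bigr => ? _]; rewrite e_sym mulrA.
transitivity (lam * (\sum_u \sum_(v in nbhd e u) birth S u * lands u v)
  + (1 - lam) * (\sum_v \sum_(u in nbhd e v) death S u v * lands u v)) => //.
rewrite birth_part death_part !mulr_sumr -big_split; apply: eq_bigr => u _.
rewrite !mulr_sumr -big_split; apply: eq_bigr => v _ /=.
by rewrite /spread; ring.
Qed.

Lemma step_trans lam (f : {set V} -> R) S :
  step (trans e lam r) f S = \sum_u \sum_v spread lam S u v * f (upd S u v).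
Proof.
rewrite /step; under eq_bigr do rewrite trans_spread mulr_suml.
rewrite exchange_big; apply: eq_bigr => u _.
under eq_bigr do rewrite mulr_suml.
rewrite exchange_big; apply: eq_bigr => v _.
rewrite (bigD1 (upd S u v)) //= eqxx mulr1 big1 ?addr0 // => S' /negbTE S'_neq.
by rewrite eq_sym S'_neq mulr0 mul0r.
Qed.

Lemma sum_birth S : \sum_u \sum_v (e u v)%:R * birth S u = 1.
Proof.
under eq_bigr => u _.
  rewrite -sum_mkcond_nbhd sumr_const -mulr_natr /birth mulfVK; last first.
    exact: lt0r_neq0 (deg_gt0 u).
  over.
by rewrite -mulr_suml mulfV // lt0r_neq0 // total_fit_gt0.
Qed.

Lemma sum_death S : \sum_u \sum_v (e u v)%:R * death S u v = 1.
Proof.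
rewrite exchange_big /=.
under eq_bigr => v _.
  under eq_bigr do rewrite e_sym.
  rewrite -sum_mkcond_nbhd -mulr_sumr -mulr_suml mulfV ?mulr1; last first.
    exact: lt0r_neq0 (nbhd_fit_gt0 S v).
  over.
by rewrite sumr_const -(mulr_natr (n^-1)) mulVf // lt0r_neq0 // n_gt0.
Qed.

Lemma sum_spread lam S : \sum_u \sum_v spread lam S u v = 1.
Proof.
transitivity (lam * (\sum_u \sum_v (e u v)%:R * birth S u)
  + (1 - lam) * (\sum_u \sum_v (e u v)%:R * death S u v)).
  rewrite !mulr_sumr -big_split; apply: eq_bigr => u _.
  rewrite !mulr_sumr -big_split; apply: eq_bigr => v _ /=.
  by rewrite /spread; ring.
by rewrite sum_birth sum_death; ring.
Qed.

Lemma trans_ge0 lam S S' : 0 <= lam <= 1 -> 0 <= trans e lam r S S'.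
Proof.
move=> lam01; rewrite trans_spread.
by do 2![apply: sumr_ge0 => ? _]; rewrite mulr_ge0 ?spread_ge0.
Qed.

Lemma trans_sum1 lam S : \sum_S' trans e lam r S S' = 1.
Proof.
have := step_trans lam (fun=> 1) S; rewrite /step.
under eq_bigr do rewrite mulr1.
by under [in RHS]eq_bigr do under eq_bigr do rewrite mulr1; rewrite sum_spread.
Qed.

Lemma birth_le_death S u v : u \in S -> v \notin S -> birth S v <= death S u v.
Proof.
move=> uS vS; rewrite /birth /death (fit_mutant uS) (fit_resident vS) mul1r.
have /andP[total_le _] := inv_total_fit_bounds S.
have /andP[_ deg_le] := inv_nbhd_fit_bounds S v.
by apply: ler_pM; rewrite // invr_ge0 ltW // ?total_fit_gt0 ?deg_gt0.
Qed.

Lemma death_le_birth S u v : u \in S -> v \notin S -> death S v u <= birth S u.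
Proof.
move=> uS vS; rewrite /birth /death (fit_mutant uS) (fit_resident vS) mul1r.
have /andP[_ n_le] := inv_total_fit_bounds S.
have /andP[nbhd_fit_le _] := inv_nbhd_fit_bounds S u.
by apply: ler_pM; rewrite // invr_ge0 ltW // ?n_gt0 ?nbhd_fit_gt0.
Qed.

Lemma birth_mutant_ge S u : u \in S -> n^-1 * n^-1 <= birth S u.
Proof.
move=> uS; rewrite /birth (fit_mutant uS).
have /andP[_ n_le] := inv_total_fit_bounds S.
apply: ler_pM; rewrite // ?invr_ge0 ?(ltW n_gt0) //.
by rewrite lef_pV2 ?posrE ?n_gt0 ?deg_gt0 ?deg_le_n.
Qed.

Lemma spread_half_le S u v : u \in S -> v \notin S ->
  spread 2^-1 S v u <= spread 2^-1 S u v.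
Proof.
move=> uS vS; rewrite /spread e_sym ler_wpM2l //.
have := birth_le_death uS vS; have := death_le_birth uS vS; lra.
Qed.

Lemma card_upd S u v :
  #|upd S u v|%:R = #|S|%:R + (u \in S)%:R - (v \in S)%:R :> R.
Proof.
rewrite /upd; case uS: (u \in S); case vS: (v \in S) => /=.
- rewrite (_ : v |: S = S) ?addrK //.
  by apply/finset.setUidPr; rewrite finset.sub1set vS.
- by rewrite cardsU1 vS natrD addrC subr0.
- by rewrite (cardsD1 v S) vS natrD addr0 [true%:R + _]addrC addrK.
- rewrite (_ : S :\ v = S) ?subr0 ?addr0 //.
  by apply/finset.setDidPl; rewrite disjoint_sym disjoints1 vS.
Qed.

Definition mutant_density S : R := #|S|%:R / n.

Lemma mutant_flux_ge0 S :
  0 <= \sum_u \sum_v spread 2^-1 S u v * ((u \in S)%:R - (v \in S)%:R).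
Proof.
apply: sumr_pair_ge0 => u v.
case uS: (u \in S); case vS: (v \in S); rewrite ?subrr ?mulr0 ?addr0 //.
- have := spread_half_le uS (negbT vS).
  by rewrite subr0 sub0r mulr1 mulrN1 subr_ge0.
- have := spread_half_le vS (negbT uS).
  by rewrite subr0 sub0r mulr1 mulrN1 addrC subr_ge0.
Qed.

Lemma mutant_density_subharmonic S :
  mutant_density S <= step (trans e 2^-1 r) mutant_density S.
Proof.
rewrite step_trans.
have -> : \sum_u \sum_v spread 2^-1 S u v * mutant_density (upd S u v) =
    mutant_density S * (\sum_u \sum_v spread 2^-1 S u v) + n^-1 *
    (\sum_u \sum_v spread 2^-1 S u v * ((u \in S)%:R - (v \in S)%:R)).
  rewrite !mulr_sumr -big_split; apply: eq_bigr => u _.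
  rewrite !mulr_sumr -big_split; apply: eq_bigr => v _ /=.
  by rewrite /mutant_density card_upd; ring.
by rewrite sum_spread mulr1 lerDl mulr_ge0 ?mutant_flux_ge0.
Qed.

Lemma cut_edge S : S != set0 -> S != [set: V] ->
  exists u v, [/\ u \in S, v \notin S & e u v].
Proof.
case/set0Pn=> x xS; rewrite finset.eqEsubset finset.subsetT => /subsetPn[y _ yS].
have [[u v] /and3P[uS vS uv] | no_cut] :=
  pickP (fun p : V * V => [&& p.1 \in S, p.2 \notin S & e p.1 p.2]).
  by exists u, v.
have S_closed : fingraph.closed e (mem S).
  apply: (intro_closed (sym_connect_sym e_sym)) => u v uv uS.
  by apply/negPn/negP => vS; have := no_cut (u, v); rewrite /= uS vS uv.
by have := closed_connect S_closed (e_conn x y); rewrite xS (negbTE yS).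
Qed.

Lemma spread_le_trans lam S u v :
  0 <= lam <= 1 -> spread lam S u v <= trans e lam r S (upd S u v).
Proof.
move=> lam01; rewrite trans_spread (bigD1 u) //= (bigD1 v) //= eqxx mulr1.
rewrite -addrA lerDl addr_ge0 //.
  by apply: sumr_ge0 => ? _; rewrite mulr_ge0 ?spread_ge0.
by do 2![apply: sumr_ge0 => ? _]; rewrite mulr_ge0 ?spread_ge0.
Qed.

Lemma spread_mutant_ge S u v : u \in S -> e u v ->
  delta <= spread 2^-1 S u v.
Proof.
move=> uS uv; rewrite /spread uv mul1r.
have := birth_mutant_ge uS; have := death_gt0 S u v; lra.
Qed.

Lemma half_01 : 0 <= (2^-1 : R) <= 1.
Proof. by rewrite invr_ge0 ler0n invf_le1 ?ler1n. Qed.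

Lemma delta_gt0 : 0 < delta.
Proof. by rewrite !mulr_gt0 ?invr_gt0 ?n_gt0. Qed.

Lemma delta_le1 : delta <= 1.
Proof.
have inv_n_le1 : n^-1 <= 1 by rewrite invf_le1 ?n_gt0 // ler1n ltnW.
have /andP[half_ge0 half_le1] := half_01.
by rewrite !mulr_ile1 ?mulr_ge0 ?invr_ge0.
Qed.

Lemma hit_setT_ge S : S != set0 ->
  delta ^+ #|V| <= hit (trans e 2^-1 r) [set: V] #|V| S.
Proof.
move=> S_neq0; apply: (hit_ge_expr (fun S S' => trans_ge0 S S' half_01)
    (ltW delta_gt0) delta_le1 (b := set0)
    (rho := fun S => #|V| - #|S|)%N) => //; last exact: leq_subr.
move=> T T_full T_empty; have [u [v [uT vT uv]]] := cut_edge T_empty T_full.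
have upd_uv : upd T u v = v |: T by rewrite /upd uT.
exists (upd T u v).
  by rewrite upd_uv; apply/set0Pn; exists v; rewrite !inE eqxx.
split; first exact: le_trans (spread_mutant_ge uT uv) (spread_le_trans _ _ _ half_01).
by have := max_card (v |: T); rewrite upd_uv !cardsU1 vT; lia.
Qed.

Lemma mutant_density_le_fp S0 : mutant_density S0 <= fp e 2^-1 r S0.
Proof.
rewrite /fp (_ : (fun t => _) = fun t => hit (trans e 2^-1 r) [set: V] t S0); last first.
  by apply/funext => t; rewrite hitV_hit.
apply: (subharmonic_le_lim_hit (fun S S' => trans_ge0 S S' half_01) (@trans_sum1 _)
  _ _ (fun S _ => mutant_density_subharmonic S) _ _ hit_setT_ge).
- by move=> S; rewrite ler_pdivrMr ?n_gt0 // mul1r ler_nat max_card.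
- by rewrite /mutant_density cards0 mul0r.
- by rewrite exprn_gt0 ?delta_gt0.
- by rewrite exprn_ile1 ?delta_le1 ?(ltW delta_gt0).
Qed.
End MixedMoran.

Theorem mainTheorem6 (R : realType) (V : finType) (e : rel V)
  (Hsimple : simple_graph e) (Hconn : connected_graph e) (Hn : (1 < #|V|)%N)
  (r : R) (Hr : 1 <= r) (S0 : {set V}) :
  #|S0|%:R / #|V|%:R <= fp e (2^-1) r S0.
Proof. by case: Hsimple => e_sym _; apply: mutant_density_le_fp. Qed.
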